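(* Let $K$ be a field of characteristic $p>0$ with $[K:K^p]=p^r$ for some integer $r\ge 1$, and let $\nu(r)_K$ be the group defined below. Then $\nu(r)_K$ is unirational.
   Context: Let $t_1,\dots,t_r$ be a $p$-basis of $K$. $\nu(r)_K$ is the closed subgroup of $\mathbf{G}_a^{p^r}$, with coordinates $x_{i(1)\cdots i(r)}$ indexed by $0\le i(1),\dots,i(r)\le p-1$, defined by $x_{0\cdots 0}-\sum_{0\le i(1),\dots,i(r)\le p-1}x_{i(1)\cdots i(r)}^p t_1^{i(1)}\cdots t_r^{i(r)}=0$; equivalently it is the kernel of $C-W^*:\operatorname{Res}_{K^{1/p}/K}\Omega^r_{K^{1/p}}\to\Omega^r_K$ (Cartier operator minus formal $p$-th power). A variety over $K$ is unirational if there is a dominant rational map to it from some affine space $\mathbb{A}^n_K$. *)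

From HB Require Import structures.
From mathcomp Require Import all_boot all_order all_algebra.
From mathcomp Require Import fraction.
From mathcomp.multinomials Require Import mpoly.
Set Implicit Arguments. Unset Strict Implicit. Unset Printing Implicit Defensive.
Import GRing.Theory.
Local Open Scope ring_scope.

Definition nu_idx (p r : nat) := {ffun 'I_r -> 'I_p}.

Definition nu_dim (p r : nat) : nat := #|{: nu_idx p r}|.

Definition tmon (K : fieldType) (p r : nat) (t : 'I_r -> K) (i : nu_idx p r) : K :=
  \prod_(j < r) t j ^+ (i j).

(* t_1..t_r is a p-basis of K: the monomials t^i (0 <= i(j) <= p-1) form a
   basis of K over K^p, i.e. every x in K is uniquely sum_i c_i^p t^i. *)
Definition is_p_basis (K : fieldType) (p r : nat) (t : 'I_r -> K) : Prop :=
  forall x : K, exists! c : {ffun nu_idx p r -> K},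
    x = \sum_(i : nu_idx p r) c i ^+ p * tmon t i.

Definition nu_var (K : fieldType) (p r : nat) (i : nu_idx p r) : {mpoly K[nu_dim p r]} :=
  'X_(enum_rank i).

Definition is_zero_idx (p r : nat) (i : nu_idx p r) : bool :=
  [forall j, (i j == 0 :> nat)].

(* The defining equation x_{0..0} - sum_i x_i^p t^i of nu(r)_K.
   (x_{0..0} is written as the sum over the unique index (0,..,0), p > 0.) *)
Definition nu_eq (K : fieldType) (p r : nat) (t : 'I_r -> K) : {mpoly K[nu_dim p r]} :=
  \sum_(i : nu_idx p r | is_zero_idx i) nu_var K i - \sum_(i : nu_idx p r) (nu_var K i) ^+ p * (tmon t i)%:MP.

Definition eval_rat (K : fieldType) (N n : nat) (g : {mpoly K[N]})
    (phi : 'I_N -> {fraction {mpoly K[n]}}) : {fraction {mpoly K[n]}} :=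
  mmap (fun c : K => @FracField.tofrac {mpoly K[n]} c%:MP) phi g.

(* The closed subscheme V(f) of A^N_K is unirational: there is a rational map
   phi : A^n_K -|-> A^N_K (components in K(y_1..y_n)) landing in V(f)
   (f(phi) = 0) and dominant onto V(f): the kernel of the comorphism
   K[x] -> K(y) is contained in the radical of (f), i.e. the closure of the
   image is all of V(f). *)
Definition unirational_hypersurface (K : fieldType) (N : nat) (f : {mpoly K[N]}) : Prop :=
  exists (n : nat) (phi : 'I_N -> {fraction {mpoly K[n]}}),
    eval_rat f phi = 0 /\
    forall g : {mpoly K[N]}, eval_rat g phi = 0 ->
      exists (m : nat) (q : {mpoly K[N]}), g ^+ m = q * f.

(* For each index i <> 0 the rational curve z |-> u_i(z),
     u_i(z)_m = (sum_(k < p, k i = m mod p) C(p-1, k) c_k z^k) / (1 + t^i z^p) - [m = 0],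
   where c_k^p t^(k i mod p) = (t^i)^k, lies on nu(r)_K: as C(p-1, k)^p = C(p-1, k),
     sum_m u_i(z)_m^p t^m = (1 + t^i z^p)^(p-1) / (1 + t^i z^p)^p - 1 = u_i(z)_0.
   The defining equation is additive, so the sum Phi of the curves u_i(eps^(w_i) Y_i) is a
   K(eps, Y)-point of nu(r)_K.  For dominance, reduce any g vanishing at Phi modulo the
   equation to degree < p in x_e, e = (1, 0, ..., 0), whose coefficient -t^e is a unit.
   The eps-adic leading terms of Phi_m are -t^e Y_e^p (m = 0) and -Y_m (m <> 0), so the
   lowest-order part of h(Phi) is a combination of distinct monomials in Y with the
   nonzero coefficients of h, and h(Phi) = 0 forces h = 0. *)

From HB Require Import structures.
From mathcomp Require Import all_boot all_order all_algebra.
From mathcomp Require Import fraction.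
From mathcomp.multinomials Require Import mpoly.
From mathcomp Require Import ring zify.
Set Implicit Arguments. Unset Strict Implicit. Unset Printing Implicit Defensive.
Import GRing.Theory.
Local Open Scope ring_scope.

Section InitialTerm.
Variables (K : fieldType) (n : nat) (e : 'I_n).
Local Notation P := {mpoly K[n]}.
Local Notation F := {fraction P}.

Definition at_e0 : {rmorphism P -> P} :=
  mmap (@mpolyC n K) (fun k => if k == e then 0 else 'X_k).

Lemma at_e0E g : at_e0 g = mmap (@mpolyC n K) (fun k => if k == e then 0 else 'X_k) g.
Proof. by []. Qed.

Lemma at_e0_Xe : at_e0 'X_e = 0.
Proof. by rewrite at_e0E mmapX mmap1U eqxx. Qed.

Lemma at_e0_X k : k != e -> at_e0 'X_k = 'X_k.
Proof. by move=> /negbTE ke; rewrite at_e0E mmapX mmap1U ke. Qed.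

Lemma at_e0_eq1_neq0 b : at_e0 b = 1 -> b != 0.
Proof. by apply: contra_eqN => /eqP ->; rewrite rmorph0 eq_sym oner_eq0. Qed.

(* [x = e^k (l + O(e))] for the e-adic valuation; [l = 0] only says that the
   order of [x] exceeds [k]. *)
Definition initial_term (k : nat) (x : F) (l : P) : Prop :=
  exists a b : P, [/\ at_e0 b = 1, at_e0 a = l & x = tofrac ('X_e ^+ k * a) / tofrac b].

Lemma initial_term_tofrac k a : initial_term k (tofrac ('X_e ^+ k * a)) (at_e0 a).
Proof. by exists a, 1; rewrite rmorph1 tofrac1 divr1. Qed.

Lemma initial_term_inv b : at_e0 b = 1 -> initial_term 0 (tofrac b)^-1 1.
Proof. by exists 1, b; rewrite rmorph1 expr0 mulr1 tofrac1 div1r. Qed.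

Lemma initial_term0 k : initial_term k 0 0.
Proof. by exists 0, 1; rewrite !rmorph0 rmorph1 mulr0 tofrac0 mul0r. Qed.

Lemma initial_term1 : initial_term 0 1 1.
Proof. by have := initial_term_tofrac 0 1; rewrite rmorph1 mulr1 tofrac1. Qed.

Lemma initial_termD k x y l l' :
  initial_term k x l -> initial_term k y l' -> initial_term k (x + y) (l + l').
Proof.
move=> [a [b [b1 <- ->]]] [a' [b' [b'1 <- ->]]].
exists (a * b' + a' * b), (b * b'); split.
- by rewrite rmorphM b1 b'1 mulr1.
- by rewrite rmorphD !rmorphM b1 b'1 !mulr1.
rewrite addf_div ?tofrac_eq0 ?at_e0_eq1_neq0 // -!rmorphM -rmorphD.
by rewrite mulrDr !mulrA.
Qed.

Lemma initial_termM k k' x y l l' :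
  initial_term k x l -> initial_term k' y l' -> initial_term (k + k') (x * y) (l * l').
Proof.
move=> [a [b [b1 <- ->]]] [a' [b' [b'1 <- ->]]].
exists (a * a'), (b * b'); split.
- by rewrite rmorphM b1 b'1 mulr1.
- by rewrite rmorphM.
by rewrite mulf_div -!rmorphM exprD mulrACA.
Qed.

Lemma initial_term_sum (T : Type) (s : seq T) (Q : pred T) k (x : T -> F) (l : T -> P) :
  (forall i, Q i -> initial_term k (x i) (l i)) ->
  initial_term k (\sum_(i <- s | Q i) x i) (\sum_(i <- s | Q i) l i).
Proof.
move=> xl; elim: s => [|i s IHs]; first by rewrite !big_nil; exact: initial_term0.
by rewrite !big_cons; case: ifP => // Qi; apply: initial_termD IHs; apply: xl.
Qed.

Lemma initial_term_prod (T : Type) (s : seq T) (k : T -> nat) (x : T -> F) (l : T -> P) :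
  (forall i, initial_term (k i) (x i) (l i)) ->
  initial_term (\sum_(i <- s) k i) (\prod_(i <- s) x i) (\prod_(i <- s) l i).
Proof.
move=> xl; elim: s => [|i s IHs]; first by rewrite !big_nil; exact: initial_term1.
by rewrite !big_cons; apply: initial_termM.
Qed.

Lemma initial_termX k x l m : initial_term k x l -> initial_term (k * m) (x ^+ m) (l ^+ m).
Proof.
move=> xl; elim: m => [|m IHm]; first by rewrite muln0 !expr0; exact: initial_term1.
by rewrite !exprS mulnS; apply: initial_termM.
Qed.

Lemma initial_term_higher k k' x l : (k < k')%N -> initial_term k' x l -> initial_term k x 0.
Proof.
move=> kk' [a [b [b1 _ ->]]]; exists ('X_e ^+ (k' - k) * a), b; split=> //.
  by rewrite rmorphM rmorphXn at_e0_Xe expr0n subn_eq0 leqNgt kk' mul0r.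
by rewrite mulrA -exprD subnKC // ltnW.
Qed.

Lemma initial_term_eq0 k l : initial_term k 0 l -> l = 0.
Proof.
move=> [a [b [b1 <- /esym/eqP]]].
rewrite mulf_eq0 invr_eq0 !tofrac_eq0 (negbTE (at_e0_eq1_neq0 b1)) orbF mulf_eq0.
have Xe_neq0 : 'X_e != 0 :> P.
  by apply/eqP => /(congr1 (mcoeff U_(e))); rewrite mcoeffXU eqxx mcoeff0 => /eqP; rewrite oner_eq0.
by rewrite expf_eq0 (negbTE Xe_neq0) andbF => /eqP ->; rewrite rmorph0.
Qed.

End InitialTerm.

Arguments at_e0 {K n} e.

Section Reduction.
Variables (K : fieldType) (n : nat) (j : 'I_n) (d : nat).
Local Notation P := {mpoly K[n]}.

Definition deg_in_lt (g : P) : Prop := forall a : 'X_{1..n}, a \in msupp g -> (a j < d)%N.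

Lemma deg_in_lt0 : deg_in_lt 0.
Proof. by move=> a; rewrite msupp0. Qed.

Lemma deg_in_ltD g g' : deg_in_lt g -> deg_in_lt g' -> deg_in_lt (g + g').
Proof. by move=> gd g'd a /msuppD_le; rewrite mem_cat => /orP[/gd|/g'd]. Qed.

Lemma deg_in_ltZ c g : deg_in_lt g -> deg_in_lt (c *: g).
Proof. by move=> gd a /msuppZ_le /gd. Qed.

Lemma deg_in_lt_sum (T : Type) (s : seq T) (Q : pred T) (g : T -> P) :
  (forall i, Q i -> deg_in_lt (g i)) -> deg_in_lt (\sum_(i <- s | Q i) g i).
Proof.
move=> gd; elim/big_rec: _ => [|i h Qi hd]; first exact: deg_in_lt0.
exact/deg_in_ltD/hd/gd.
Qed.

Lemma deg_in_ltX (a : 'X_{1..n}) : (a j < d)%N -> deg_in_lt 'X_[a].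
Proof. by move=> ad b; rewrite msuppX mem_seq1 => /eqP ->. Qed.

Variables (c : K) (f : P).
Hypotheses (c_neq0 : c != 0) (f_deg : deg_in_lt (f - c *: 'X_j ^+ d)).

Let reduces g := exists q h, g = q * f + h /\ deg_in_lt h.

Let reducesD g g' : reduces g -> reduces g' -> reduces (g + g').
Proof.
move=> [q [h [-> hd]]] [q' [h' [-> h'd]]]; exists (q + q'), (h + h').
by rewrite mulrDl addrACA; split=> //; apply: deg_in_ltD.
Qed.

Let reducesZ a g : reduces g -> reduces (a *: g).
Proof.
move=> [q [h [-> hd]]]; exists (a *: q), (a *: h).
by rewrite scalerDr scalerAl; split=> //; apply: deg_in_ltZ.
Qed.

Let reduces_sum (T : Type) (s : seq T) (Q : pred T) (g : T -> P) :
  (forall i, Q i -> reduces (g i)) -> reduces (\sum_(i <- s | Q i) g i).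
Proof.
move=> gr; elim/big_rec: _ => [|i h Qi hr]; last exact: reducesD (gr i Qi) hr.
by exists 0, 0; rewrite mul0r addr0; split=> //; apply: deg_in_lt0.
Qed.

(* [X^a = c^-1 X^(a - d U_j) (f - (f - c X_j^d))], and the second product has
   smaller degree in [X_j]. *)
Let reducesX m (a : 'X_{1..n}) : (a j < m)%N -> reduces 'X_[a].
Proof.
elim: m a => // m IHm a; rewrite ltnS => ajm.
have [ad|da] := ltnP (a j) d.
  by exists 0, 'X_[a]; rewrite mul0r add0r; split=> //; apply: deg_in_ltX.
pose a' := (a - U_(j) *+ d)%MM.
have aE : a = (a' + U_(j) *+ d)%MM.
  rewrite submK //; apply/mnm_lepP => i; rewrite mulmnE mnm1E.
  by case: eqP => [<-|_]; rewrite ?mul1n ?mul0n.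
set f' := f - c *: 'X_j ^+ d.
have -> : 'X_[a] = c^-1 *: ('X_[a'] * f) + (- c^-1) *: ('X_[a'] * f').
  rewrite scaleNr -scalerBr -mulrBr /f' opprB addrC subrK -scalerAr scalerA.
  by rewrite mulVf // scale1r mpolyXn -mpolyXD -aE.
apply: reducesD.
  by exists (c^-1 *: 'X_[a']), 0; rewrite addr0 scalerAl; split=> //; apply: deg_in_lt0.
apply: reducesZ; rewrite (mpolyE f') mulr_sumr big_seq; apply: reduces_sum => b /f_deg bd.
rewrite -scalerAr -mpolyXD; apply/reducesZ/IHm.
by rewrite mnmDE mnmBE mulmnE mnm1E eqxx mul1n; lia.
Qed.

Lemma mpoly_reduce g : exists q h, g = q * f + h /\ deg_in_lt h.
Proof.
rewrite (mpolyE g); apply: reduces_sum => a _; apply: reducesZ.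
exact: (reducesX (ltnSn _)).
Qed.

End Reduction.

Lemma expr_sum_pchar (R : comNzSemiRingType) (p : nat) (pchar_R : p \in [pchar R])
    (T : Type) (s : seq T) (Q : pred T) (G : T -> R) :
  (\sum_(j <- s | Q j) G j) ^+ p = \sum_(j <- s | Q j) G j ^+ p.
Proof.
rewrite -(pFrobenius_autE pchar_R) rmorph_sum; apply: eq_bigr => j _.
exact: pFrobenius_autE.
Qed.

Section NuGroup.
Variables (K : fieldType) (p r : nat) (t : 'I_r -> K).
Hypotheses (p_prime : prime p) (pchar_K : p \in [pchar K]).

Local Notation I := (nu_idx p r).

Let p_gt0 : (0 < p)%N := prime_gt0 p_prime.

Definition idx0 : I := [ffun _ => Ordinal p_gt0].

Lemma is_zero_idxE i : is_zero_idx i = (i == idx0).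
Proof.
apply/forallP/eqP => [i0|-> l]; last by rewrite ffunE.
by apply/ffunP => l; apply/val_inj; rewrite ffunE; apply/eqP/i0.
Qed.

Lemma tmon_idx0 : tmon t idx0 = 1.
Proof. by rewrite /tmon big1 // => l _; rewrite ffunE. Qed.

Definition idx_scale (k : nat) (i : I) : I := [ffun l => Ordinal (ltn_pmod (k * i l) p_gt0)].

Definition idx_carry (k : nat) (i : I) : K := \prod_(l < r) t l ^+ ((k * i l) %/ p).

Lemma idx_carry_tmon k i : idx_carry k i ^+ p * tmon t (idx_scale k i) = tmon t i ^+ k.
Proof.
rewrite /tmon /idx_carry -!prodrXl -big_split; apply: eq_bigr => l _.
by rewrite ffunE /= -!exprM -exprD [in RHS]mulnC -divn_eq.
Qed.

Lemma idx_scale1 i : idx_scale 1 i = i.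
Proof. by apply/ffunP => l; apply/val_inj; rewrite ffunE /= mul1n modn_small. Qed.

Lemma idx_carry0 i : idx_carry 0 i = 1.
Proof. by rewrite /idx_carry big1 // => l _; rewrite mul0n div0n. Qed.

Lemma idx_carry1 i : idx_carry 1 i = 1.
Proof. by rewrite /idx_carry big1 // => l _; rewrite mul1n divn_small. Qed.

Lemma idx_scale_eq0 (k : 'I_p) i : i != idx0 -> (idx_scale k i == idx0) = (k == 0 :> nat).
Proof.
move=> i_neq0; apply/eqP/eqP => [/ffunP k_i0|k0]; last first.
  by apply/ffunP => l; apply/val_inj; rewrite !ffunE /= k0 mul0n mod0n.
apply: contra_neq_eq i_neq0 => k_neq0; apply/ffunP => l; apply/val_inj.
have /(congr1 val)/eqP := k_i0 l; rewrite !ffunE /= -/(dvdn p _) Euclid_dvdM //.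
rewrite gtnNdvd ?lt0n ?ltn_ord //=.
by case: (posnP (i l)) => [//|il_gt0]; rewrite gtnNdvd ?ltn_ord.
Qed.

Section Curve.
Variables (L : fieldType) (sigma : {rmorphism K -> L}).

Let pchar_L : p \in [pchar L] := rmorph_pchar sigma pchar_K.

Let exprB_pchar (x y : L) : (x - y) ^+ p = x ^+ p - y ^+ p.
Proof. by rewrite -!(pFrobenius_autE pchar_L) rmorphB. Qed.

Definition curve (i : I) (z : L) (m : I) : L :=
  (\sum_(k < p | idx_scale k i == m) sigma ('C(p.-1, k)%:R * idx_carry k i) * z ^+ k)
    / (1 + sigma (tmon t i) * z ^+ p) - (m == idx0)%:R.

Lemma curve_idx0 i z : i != idx0 -> 1 + sigma (tmon t i) * z ^+ p != 0 ->
  curve i z idx0 = - (sigma (tmon t i) * z ^+ p) / (1 + sigma (tmon t i) * z ^+ p).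
Proof.
move=> i_neq0 D_neq0; rewrite /curve eqxx (big_pred1 (Ordinal p_gt0)) => [|k]; last first.
  by rewrite /= idx_scale_eq0 // -val_eqE.
by rewrite /= bin0 idx_carry0 mulr1 rmorph1 mul1r; field.
Qed.

Lemma curve_on_nu i z : i != idx0 -> 1 + sigma (tmon t i) * z ^+ p != 0 ->
  \sum_m curve i z m ^+ p * sigma (tmon t m) = curve i z idx0.
Proof.
move=> i_neq0; set D := 1 + _ => D_neq0.
pose S m := \sum_(k < p | idx_scale k i == m) sigma ('C(p.-1, k)%:R * idx_carry k i) * z ^+ k.
have S_tmon : \sum_m S m ^+ p * sigma (tmon t m) = D ^+ p.-1.
  transitivity (\sum_(k < p) 'C(p.-1, k)%:R * (sigma (tmon t i) * z ^+ p) ^+ k).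
    symmetry; rewrite (partition_big (fun k : 'I_p => idx_scale k i) xpredT) //=.
    apply: eq_bigr => m _.
    rewrite /S (expr_sum_pchar pchar_L) mulr_suml.
    apply: eq_bigr => k /eqP <-.
    have coefE : ('C(p.-1, k)%:R * idx_carry k i) ^+ p * tmon t (idx_scale k i) =
                 'C(p.-1, k)%:R * tmon t i ^+ k.
      by rewrite exprMn -mulrA idx_carry_tmon -(pFrobenius_autE pchar_K) pFrobenius_aut_nat.
    by rewrite !exprMn -!rmorphXn mulrAC -rmorphM coefE rmorphM rmorph_nat exprAC mulrA.
  rewrite /D addrC exprD1n -(big_mkord xpredT (fun k => 'C(p.-1, k)%:R * _ ^+ k)).
  rewrite -(big_mkord xpredT (fun k => _ ^+ k *+ 'C(p.-1, k))) prednK //.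
  by apply: eq_bigr => k _; rewrite mulr_natl.
have curveE m : curve i z m ^+ p = S m ^+ p / D ^+ p - (m == idx0)%:R.
  by rewrite /curve exprB_pchar -(pFrobenius_autE pchar_L (_%:R)) pFrobenius_aut_nat exprMn exprVn.
rewrite (eq_bigr (fun m => S m ^+ p * sigma (tmon t m) / D ^+ p
                            - (m == idx0)%:R * sigma (tmon t m))) => [|m _]; last first.
  by rewrite curveE mulrBl mulrAC.
rewrite sumrB -mulr_suml S_tmon (bigD1 idx0) //= eqxx mul1r tmon_idx0 rmorph1.
rewrite big1 ?addr0 => [|m /negbTE ->]; last by rewrite mul0r.
have -> : D ^+ p = D * D ^+ p.-1 by rewrite -exprS prednK.
rewrite curve_idx0 // invfM mulrCA divff ?mulr1 ?expf_neq0 //.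
by rewrite /D in D_neq0 *; field.
Qed.

End Curve.

Hypothesis r_gt0 : (0 < r)%N.

Let p_gt1 : (1 < p)%N := prime_gt1 p_prime.

Definition idx1 : I := [ffun l : 'I_r => if val l == 0%N then Ordinal p_gt1 else Ordinal p_gt0].

Lemma idx1_neq0 : idx1 != idx0.
Proof. by apply/eqP => /ffunP /(_ (Ordinal r_gt0)) /(congr1 val); rewrite !ffunE. Qed.

Local Notation N := (nu_dim p r).
Local Notation P := {mpoly K[N.+1]}.
Local Notation F := {fraction P}.

Definition polyC_frac : {rmorphism K -> F} := @tofrac P \o @mpolyC N.+1 K.

Lemma eval_ratE (g : {mpoly K[N]}) (x : 'I_N -> F) : eval_rat g x = mmap polyC_frac x g.
Proof. by []. Qed.

Definition eps : 'I_N.+1 := ord_max.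
Definition yvar (i : I) : 'I_N.+1 := widen_ord (leqnSn N) (enum_rank i).

Lemma yvar_neq_eps i : yvar i != eps.
Proof. by rewrite -val_eqE /= neq_ltn ltn_ord. Qed.

Lemma yvar_inj : injective yvar.
Proof. by move=> i j /(congr1 val) /= /val_inj /enum_rank_inj. Qed.

(* The [idx1]-curve gives the lowest order [2p] in the coordinate [x_0], while
   the linear term of every curve (order [weight m <= 3]) beats its terms of
   degree [k >= 2] (order [>= 4]). *)
Definition weight (i : I) : nat := if i == idx1 then 2 else 3.

Definition curve_param (i : I) : F := tofrac ('X_eps ^+ weight i * 'X_(yvar i)).

Definition Phi (m : I) : F := \sum_(i | i != idx0) curve polyC_frac i (curve_param i) m.

Definition phi (k : 'I_N) : F := Phi (enum_val k).

Lemma curve_denomE i :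
  1 + polyC_frac (tmon t i) * curve_param i ^+ p =
  tofrac (1 + 'X_eps ^+ (weight i * p) * ((tmon t i)%:MP * 'X_(yvar i) ^+ p)).
Proof.
by rewrite /curve_param -rmorphXn /= -!rmorphM -rmorphD /= exprMn -exprM mulrCA.
Qed.

Lemma at_e0_curve_denom i :
  at_e0 eps (1 + 'X_eps ^+ (weight i * p) * ((tmon t i)%:MP * 'X_(yvar i) ^+ p)) = 1.
Proof.
rewrite rmorphD rmorph1 rmorphM rmorphXn at_e0_Xe expr0n muln_eq0.
by rewrite /weight; case: ifP; rewrite /= gtn_eqF // mul0r addr0.
Qed.

Lemma curve_denom_neq0 i : 1 + polyC_frac (tmon t i) * curve_param i ^+ p != 0.
Proof. by rewrite curve_denomE tofrac_eq0 (at_e0_eq1_neq0 (at_e0_curve_denom i)). Qed.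

Lemma Phi_on_nu : eval_rat (@nu_eq K p r t) phi = 0.
Proof.
have phi_var i : mmap polyC_frac phi (nu_var K i) = Phi i.
  by rewrite /nu_var mmapX mmap1U /phi enum_rankK.
rewrite eval_ratE /nu_eq rmorphB !rmorph_sum /=.
rewrite (big_pred1 idx0) => [|i]; last by rewrite /= is_zero_idxE.
rewrite phi_var (eq_bigr (fun m => Phi m ^+ p * polyC_frac (tmon t m))); last first.
  by move=> m _; rewrite rmorphM rmorphXn /= phi_var mmapC.
have pchar_F : p \in [pchar F] := rmorph_pchar polyC_frac pchar_K.
rewrite (eq_bigr (fun m => \sum_(i | i != idx0) curve polyC_frac i (curve_param i) m ^+ p
                            * polyC_frac (tmon t m))) => [|m _]; last first.
  by rewrite /Phi (expr_sum_pchar pchar_F) mulr_suml.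
rewrite exchange_big /Phi -sumrB big1 // => i i_neq0.
by rewrite curve_on_nu ?subrr // curve_denom_neq0.
Qed.

Lemma initial_term_const a : initial_term eps 0 (polyC_frac a) a%:MP.
Proof. by have := initial_term_tofrac eps 0 a%:MP; rewrite expr0 mul1r at_e0E mmapC. Qed.

Lemma initial_term_zpar i : initial_term eps (weight i) (curve_param i) 'X_(yvar i).
Proof.
rewrite -[X in initial_term _ _ _ X](at_e0_X K (yvar_neq_eps i)).
exact: initial_term_tofrac.
Qed.

Lemma initial_term_curve_denom_inv i :
  initial_term eps 0 (1 + polyC_frac (tmon t i) * curve_param i ^+ p)^-1 1.
Proof. by rewrite curve_denomE; apply/initial_term_inv/at_e0_curve_denom. Qed.

Lemma initial_term_curve i m : i != idx0 -> m != idx0 ->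
  initial_term eps (weight m) (curve polyC_frac i (curve_param i) m)
    (if i == m then - 'X_(yvar m) else 0).
Proof.
move=> i_neq0 m_neq0; rewrite /curve (negbTE m_neq0) subr0 mulr_suml.
have -> : (if i == m then - 'X_(yvar m) else 0) =
    \sum_(k < p | idx_scale k i == m) if k == 1 :> nat then - 'X_(yvar m) else 0 :> P.
  case: eqP => [<-|i_neq_m].
    rewrite (bigD1 (Ordinal p_gt1)) ?idx_scale1 //= big1 ?addr0 // => k /andP[_].
    by rewrite -val_eqE => /negbTE ->.
  symmetry; apply: big1 => k /eqP k_im; have [k1|//] := eqVneq (k : nat) 1.
  by case: i_neq_m; rewrite -k_im k1 idx_scale1.
apply: initial_term_sum => k /eqP k_im.
have term := initial_termM (initial_termM
  (initial_term_const ('C(p.-1, k)%:R * idx_carry k i)) (initial_termX k (initial_term_zpar i)))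
  (initial_term_curve_denom_inv i).
have [k1|k_neq1] := eqVneq (k : nat) 1.
  have pm1 : (p.-1)%:R = -1 :> K by rewrite -subn1 natrB // (pcharf0 pchar_K) sub0r.
  rewrite -k_im k1 idx_scale1; move: term; rewrite k1 bin1 idx_carry1 pm1 add0n addn0.
  by rewrite muln1 !mulr1 !expr1 mpolyCN mpolyC1 mulN1r.
have k_neq0 : (k : nat) != 0.
  by apply: contra_neq m_neq0 => k0; rewrite -k_im; apply/eqP; rewrite idx_scale_eq0 // k0.
apply: initial_term_higher term.
by rewrite add0n addn0 /weight; case: ifP; case: ifP; lia.
Qed.

Lemma initial_term_curve_idx0 i : i != idx0 ->
  initial_term eps (weight i * p) (curve polyC_frac i (curve_param i) idx0)
    ((- tmon t i) *: 'X_[U_(yvar i) *+ p]).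
Proof.
move=> i_neq0; rewrite curve_idx0 ?curve_denom_neq0 // -mulNr -rmorphN.
have := initial_termM (initial_termM (initial_term_const (- tmon t i))
  (initial_termX p (initial_term_zpar i))) (initial_term_curve_denom_inv i).
by rewrite add0n addn0 mulr1 mul_mpolyC mpolyXn.
Qed.

Definition init_weight (m : I) : nat := if m == idx0 then (2 * p)%N else weight m.
Definition init_coef (m : I) : K := if m == idx0 then - tmon t idx1 else -1.
Definition init_mnm (m : I) : 'X_{1..N.+1} :=
  if m == idx0 then (U_(yvar idx1) *+ p)%MM else U_(yvar m)%MM.

Lemma initial_term_Phi m :
  initial_term eps (init_weight m) (Phi m) (init_coef m *: 'X_[init_mnm m]).
Proof.
rewrite /Phi /init_weight /init_coef /init_mnm; case: eqP => [->|/eqP m_neq0].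
  have -> : (- tmon t idx1) *: 'X_[U_(yvar idx1) *+ p] = \sum_(i | i != idx0)
      if i == idx1 then (- tmon t i) *: 'X_[U_(yvar i) *+ p] else 0 :> P.
    by rewrite (bigD1 idx1) ?idx1_neq0 //= eqxx big1 ?addr0 // => i /andP[_ /negbTE ->].
  apply: initial_term_sum => i i_neq0; have := initial_term_curve_idx0 i_neq0.
  case: eqP => [->|/eqP i_neq1]; first by rewrite /weight eqxx.
  by apply: initial_term_higher; rewrite /weight (negbTE i_neq1); lia.
have -> : (-1) *: 'X_[U_(yvar m)] =
    \sum_(i | i != idx0) if i == m then - 'X_(yvar m) else 0 :> P.
  by rewrite (bigD1 m) //= eqxx big1 ?addr0 ?scaleN1r // => i /andP[_ /negbTE ->].
by apply: initial_term_sum => i i_neq0; apply: initial_term_curve.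
Qed.

Lemma init_coef_neq0 m : tmon t idx1 != 0 -> init_coef m != 0.
Proof. by move=> t1_neq0; rewrite /init_coef; case: ifP; rewrite oppr_eq0 ?oner_eq0. Qed.

Definition mon_weight (a : 'X_{1..N}) : nat := \sum_(k < N) init_weight (enum_val k) * a k.
Definition mon_mnm (a : 'X_{1..N}) : 'X_{1..N.+1} :=
  (\sum_(k < N) init_mnm (enum_val k) *+ a k)%MM.

Lemma initial_term_phi_mon c (a : 'X_{1..N}) :
  initial_term eps (mon_weight a) (polyC_frac c * \prod_(k < N) phi k ^+ a k)
    ((c * \prod_(k < N) init_coef (enum_val k) ^+ a k) *: 'X_[mon_mnm a]).
Proof.
have -> : (c * \prod_(k < N) init_coef (enum_val k) ^+ a k) *: 'X_[mon_mnm a] =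
    c%:MP * \prod_(k < N) (init_coef (enum_val k) *: 'X_[init_mnm (enum_val k)]) ^+ a k.
  rewrite [in RHS](eq_bigr (fun k => init_coef (enum_val k) ^+ a k *:
    'X_[init_mnm (enum_val k)] ^+ a k)) => [|k _]; last exact: exprZn.
  by rewrite scaler_prod mprodXnE mul_mpolyC scalerA.
rewrite -[mon_weight a]add0n; apply: initial_termM (initial_term_const c) _.
by apply: initial_term_prod => k; apply/initial_termX/initial_term_Phi.
Qed.

Lemma mon_mnm_yvar (a : 'X_{1..N}) l : l != idx0 ->
  mon_mnm a (yvar l) = ((l == idx1) * (p * a (enum_rank idx0)) + a (enum_rank l))%N.
Proof.
move=> l_neq0; rewrite /mon_mnm mnm_sumE.
rewrite (eq_bigr (fun k => init_mnm (enum_val k) (yvar l) * a k)%N) => [|k _]; last first.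
  by rewrite mulmnE.
rewrite (reindex (@enum_rank I)) /=; last exact/onW_bij/enum_rank_bij.
rewrite (bigD1 idx0) //= (bigD1 l) //= big1 ?addn0 => [|m /andP[m_neq0 m_neq_l]]; last first.
  by rewrite enum_rankK /init_mnm (negbTE m_neq0) mnm1E (inj_eq yvar_inj) (negbTE m_neq_l).
rewrite !enum_rankK /init_mnm eqxx (negbTE l_neq0) !mulmnE !mnm1E (inj_eq yvar_inj) eqxx.
by rewrite mul1n mulnA eq_sym.
Qed.

Lemma mon_mnm_inj (a a' : 'X_{1..N}) :
  (a (enum_rank idx1) < p)%N -> (a' (enum_rank idx1) < p)%N -> mon_mnm a = mon_mnm a' -> a = a'.
Proof.
move=> a1_lt a'1_lt aa'; have aa'_at l := congr1 (fun b : 'X_{1..N.+1} => b (yvar l)) aa'.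
have := aa'_at idx1; rewrite /= !mon_mnm_yvar ?idx1_neq0 // eqxx !mul1n => aa'1.
have a1E : a (enum_rank idx1) = a' (enum_rank idx1).
  by have := congr1 (modn^~ p) aa'1; rewrite /= !(mulnC p) !modnMDl !modn_small.
have a0E : a (enum_rank idx0) = a' (enum_rank idx0).
  by move: aa'1; rewrite a1E => /addIn /eqP; rewrite eqn_pmul2l // => /eqP.
apply/mnmP => k; rewrite -(enum_valK k); set m := enum_val k.
have [->|m_neq0] := eqVneq m idx0; first by [].
have [->|m_neq1] := eqVneq m idx1; first by [].
by have := aa'_at m; rewrite /= !mon_mnm_yvar // (negbTE m_neq1) !mul0n !add0n.
Qed.

(* The lowest-weight part of [h(phi)] is a combination of the distinct monomials
   [mon_mnm a], with nonzero coefficients. *)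
Lemma eval_phi_eq0 (h : {mpoly K[N]}) : tmon t idx1 != 0 ->
  deg_in_lt (enum_rank idx1) p h -> eval_rat h phi = 0 -> h = 0.
Proof.
move=> t1_neq0 h_deg h_phi; apply/eqP/negPn/negP => h_neq0.
have : exists mu, has (fun a => mon_weight a == mu) (msupp h).
  move: h_neq0; rewrite -msupp_eq0; case: (msupp h) => // a s _.
  by exists (mon_weight a); rewrite /= eqxx.
case/ex_minnP => mu /hasP[a0 a0_h /eqP a0_mu] mu_min.
pose lowest a := if mon_weight a == mu
  then (h@_a * \prod_(k < N) init_coef (enum_val k) ^+ a k) *: 'X_[mon_mnm a] else 0.
have : initial_term eps mu (eval_rat h phi) (\sum_(a <- msupp h) lowest a).
  rewrite eval_ratE /mmap /mmap1 big_seq_cond [X in initial_term _ _ _ X]big_seq_cond.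
  apply: initial_term_sum => a /andP[a_h _]; rewrite /lowest.
  case: eqP => [<-|a_mu]; first exact: initial_term_phi_mon.
  apply: initial_term_higher (initial_term_phi_mon _ a).
  by rewrite ltn_neqAle mu_min ?andbT; [apply/eqP => mu_a; apply: a_mu | apply/hasP; exists a].
rewrite h_phi => /initial_term_eq0 /(congr1 (mcoeff (mon_mnm a0))).
rewrite mcoeff0 raddf_sum (bigD1_seq a0) ?msupp_uniq //= /lowest a0_mu eqxx mcoeffZ mcoeffX.
rewrite eqxx mulr1 [X in _ + X]big_seq_cond [X in _ + X]big1 ?addr0 => [/eqP|a]; last first.
  case/andP=> a_h a_neq_a0; case: ifP => _; last by rewrite mcoeff0.
  rewrite mcoeffZ mcoeffX; case: eqP => [/mon_mnm_inj a_a0|_]; last by rewrite mulr0.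
  by rewrite a_a0 ?h_deg ?eqxx in a_neq_a0.
apply/negP; rewrite mulf_neq0 -?mcoeff_msupp // prodf_seq_neq0.
by apply/allP => k _ /=; rewrite expf_neq0 // init_coef_neq0.
Qed.

Lemma nu_eq_deg_in_lt :
  deg_in_lt (enum_rank idx1) p (@nu_eq K p r t - (- tmon t idx1) *: 'X_(enum_rank idx1) ^+ p).
Proof.
have -> : @nu_eq K p r t - (- tmon t idx1) *: 'X_(enum_rank idx1) ^+ p =
    \sum_(i | is_zero_idx i) nu_var K i - \sum_(i | i != idx1) nu_var K i ^+ p * (tmon t i)%:MP.
  by rewrite /nu_eq [X in _ - X - _](bigD1 idx1) //= -mul_mpolyC mpolyCN /nu_var; ring.
apply: deg_in_ltD.
  apply: deg_in_lt_sum => i; rewrite is_zero_idxE => /eqP ->; apply: deg_in_ltX.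
  by rewrite mnm1E (inj_eq enum_rank_inj) eq_sym (negbTE idx1_neq0).
rewrite -scaleN1r; apply/deg_in_ltZ/deg_in_lt_sum => i i_neq1.
rewrite mulrC mul_mpolyC /nu_var mpolyXn; apply/deg_in_ltZ/deg_in_ltX.
by rewrite mulmnE mnm1E (inj_eq enum_rank_inj) (negbTE i_neq1).
Qed.

Lemma nu_unirational : tmon t idx1 != 0 -> unirational_hypersurface (@nu_eq K p r t).
Proof.
move=> t1_neq0; exists N.+1, phi; split; first exact: Phi_on_nu.
move=> g g_phi; have c_neq0 : - tmon t idx1 != 0 by rewrite oppr_eq0.
have [q [h [gE h_deg]]] := mpoly_reduce c_neq0 nu_eq_deg_in_lt g.
have h_phi : eval_rat h phi = 0.
  have -> : h = g - q * @nu_eq K p r t by rewrite gE addrC addKr.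
  have f_phi := Phi_on_nu; rewrite !eval_ratE in g_phi f_phi *.
  by rewrite rmorphB rmorphM /= g_phi f_phi mulr0 subr0.
by exists 1%N, q; rewrite expr1 gE (eval_phi_eq0 t1_neq0 h_deg h_phi) addr0.
Qed.

End NuGroup.

Lemma p_basis_tmon_neq0 (K : fieldType) (p r : nat) (t : 'I_r -> K) (i : nu_idx p r) :
  (0 < p)%N -> @is_p_basis K p r t -> tmon t i != 0.
Proof.
move=> p_gt0 t_basis; apply/eqP => ti0; have [c [_ c_uniq]] := t_basis 0.
pose d : {ffun nu_idx p r -> K} := [ffun j => (j == i)%:R].
have rep0 : 0 = \sum_j ([ffun=> 0] : {ffun nu_idx p r -> K}) j ^+ p * tmon t j.
  by rewrite big1 // => j _; rewrite ffunE expr0n gtn_eqF // mul0r.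
have repi : 0 = \sum_j d j ^+ p * tmon t j.
  rewrite (bigD1 i) //= ffunE eqxx expr1n mul1r ti0 add0r big1 // => j /negbTE ji.
  by rewrite ffunE ji expr0n gtn_eqF // mul0r.
have /ffunP /(_ i) := etrans (esym (c_uniq _ rep0)) (c_uniq _ repi).
by rewrite !ffunE eqxx => /eqP; rewrite eq_sym oner_eq0.
Qed.

Unset Implicit Arguments.
Set Strict Implicit.

Theorem proposition8p4 (K : fieldType) (p r : nat) (t : 'I_r -> K) :
  prime p -> p \in [pchar K] -> (1 <= r)%N -> @is_p_basis K p r t ->
  unirational_hypersurface (@nu_eq K p r t).
Proof.
move=> p_prime pchar_K r_gt0 t_basis.
apply: (nu_unirational (p_prime := p_prime) pchar_K r_gt0).
exact: p_basis_tmon_neq0 (prime_gt0 p_prime) t_basis.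
Qed.
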